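(* Consider a Stochastic Non-atomic Congestion Game (SNCG) as described in the context, with a non-atomic agent measure $m$, in which agents are divided into multiple types. Let $\bm{\pi}^*$ be a Nash equilibrium joint policy. Then for every global state $s$ and every local state $z$, any two agents of the same type that are both in local state $z$ have equal values at $s$ under $\bm{\pi}^*$.
   Context: An SNCG is a tuple $\langle \mathcal{N}, \mathcal{Z}, \mathcal{S}, \mathcal{A}, \mathcal{T}, \mathcal{R}\rangle$. The set of agents $\mathcal{N}$ is endowed with a finite non-atomic Lebesgue measure $m$ ($m(\{i\})=0$ for each agent $i$, $m(\mathcal{N})=1$). $\mathcal{Z}$ is a finite set of local states; in a global state $s$, $\mathcal{N}$ is partitioned into the sets $\mathcal{N}^s_z$ of agents in local state $z$, and $s$ is identified with the distribution of masses of agents over local states. Each local state $z$ has an action set $\mathcal{A}_z$; a policy $\pi_i = (\pi_{iz}(s))_{s,z}$ of agent $i$ gives a distribution over $\mathcal{A}_z$ in each $(s,z)$. The joint action $\bm{a}$ is the collection of masses $f^a_z(s)$ of agents in local state $z$ choosing action $a$, and $\phi^a(s,\bm{a}) = \sum_z f^a_z(s)$. Rewards $\mathcal{R}_z$ depend on the global state, the local state and these masses (non-increasing, continuous), and global transitions $\mathcal{T}(s'\mid s,\bm{a})$ depend only on these masses. With multiple agent types, agents of the same type in the same local state have the same available actions and reward functions (rewards and transitions do not depend on agent identities beyond type). With discount $\gamma$, the value of agent $j$ in local state $z$ is $v_{jz}(s,\pi_{jz},\bm{\pi}_{-j}) = \mathcal{R}_z(s,\phi^{\pi_{jz}(s)}(s,\bm{a}))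 + \gamma\int_{s'}\mathcal{T}(s'\mid s,\bm{a})v_{jz'}(s',\pi_{jz'},\bm{\pi}_{-j})\,ds'$. A joint policy $\bm{\pi}$ is a Nash equilibrium if no agent in any global and local state can increase its value by unilaterally changing its local policy. *)

From HB Require Import structures.
From mathcomp Require Import all_boot all_order all_algebra.
From mathcomp Require Import all_classical all_reals all_analysis.
Set Implicit Arguments. Unset Strict Implicit. Unset Printing Implicit Defensive.
Import Order.TTheory GRing.Theory Num.Theory.
Local Open Scope classical_set_scope.
Local Open Scope ring_scope.

Section SNCG.
Context {R : realType} {dN dS : measure_display}
  {N : measurableType dN} (* agents *)
  {S : measurableType dS} (* global states *)
  {Z Act : finType}       (* local states, actions *)
  {Ty : Type}.

Definition local_dist (A : {set Act}) (p : Act -> R) : Prop :=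
  [/\ forall a, 0 <= p a, forall a, a \notin A -> p a = 0 & \sum_a p a = 1].

Definition policy_ok (avail : Ty -> Z -> {set Act}) (t : Ty)
  (p : S -> Z -> Act -> R) : Prop :=
  forall s z, local_dist (avail t z) (p s z).

(* A joint policy: each agent's policy is valid, and the profile is measurable
   in the agent (so that the masses below are well defined). *)
Definition joint_policy_ok (avail : Ty -> Z -> {set Act}) (ty : N -> Ty)
  (pi : N -> S -> Z -> Act -> R) : Prop :=
  (forall i, policy_ok avail (ty i) (pi i)) /\
  (forall s z a, measurable_fun setT (fun i => pi i s z a)).

Definition mass (m : {measure set N -> \bar R}) (loc : S -> N -> Z)
  (pi : N -> S -> Z -> Act -> R) (s : S) (z : Z) (a : Act) : R :=
  Rintegral m (loc s @^-1` [set z]) (fun i => pi i s z a).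

Definition phi (M : Z -> Act -> R) (a : Act) : R := \sum_z M z a.

(* Bellman operator for one agent of fixed type (reward Rw, individual
   local-state transition P), with own policy p, facing the mass profile M. *)
Definition bellman (gamma : R) (Rw : Z -> S -> Act -> R -> R)
  (T : S -> (Z -> Act -> R) -> probability S R)
  (P : Z -> Act -> S -> (Z -> Act -> R) -> S -> Z -> R)
  (p : S -> Z -> Act -> R) (M : S -> Z -> Act -> R) (W : S -> Z -> R)
  : S -> Z -> R :=
  fun s z => \sum_a p s z a *
    (Rw z s a (phi (M s) a) +
     gamma * Rintegral (T s (M s)) setT
               (fun s' => \sum_z' P z a s (M s) s' z' * W s' z')).

Definition is_value gamma Rw T P p M (W : S -> Z -> R) : Prop :=
  [/\ exists C : R, forall s z, `|W s z| <= C,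
      forall z, measurable_fun setT (fun s => W s z)
    & bellman gamma Rw T P p M W = W].

Definition value gamma Rw T P p M : S -> Z -> R :=
  match pselect (exists W, is_value gamma Rw T P p M W) with
  | left h => projT1 (cid h)
  | right _ => fun _ _ => 0
  end.

Definition deviate (pi : N -> S -> Z -> Act -> R) (j : N)
  (p : S -> Z -> Act -> R) : N -> S -> Z -> Act -> R :=
  fun i => if `[< i = j >] then p else pi i.

Definition agent_value (m : {measure set N -> \bar R}) (ty : N -> Ty)
  (loc : S -> N -> Z) (Rw : Ty -> Z -> S -> Act -> R -> R)
  (T : S -> (Z -> Act -> R) -> probability S R)
  (P : Ty -> Z -> Act -> S -> (Z -> Act -> R) -> S -> Z -> R)
  (gamma : R) (pi : N -> S -> Z -> Act -> R) (j : N) : S -> Z -> R :=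
  value gamma (Rw (ty j)) T (P (ty j)) (pi j) (mass m loc pi).

Definition nash (m : {measure set N -> \bar R}) (ty : N -> Ty)
  (loc : S -> N -> Z) (avail : Ty -> Z -> {set Act})
  (Rw : Ty -> Z -> S -> Act -> R -> R)
  (T : S -> (Z -> Act -> R) -> probability S R)
  (P : Ty -> Z -> Act -> S -> (Z -> Act -> R) -> S -> Z -> R)
  (gamma : R) (pi : N -> S -> Z -> Act -> R) : Prop :=
  forall (j : N) (p : S -> Z -> Act -> R), policy_ok avail (ty j) p ->
  forall s : S,
    agent_value m ty loc Rw T P gamma (deviate pi j p) j s (loc s j)
    <= agent_value m ty loc Rw T P gamma pi j s (loc s j).

End SNCG.

From HB Require Import structures.
From mathcomp Require Import all_boot all_order all_algebra.
From mathcomp Require Import all_classical all_reals all_analysis.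
From mathcomp Require Import measurable_realfun.
Import Order.TTheory GRing.Theory Num.Theory.
Import numFieldNormedType.Exports.
Local Open Scope classical_set_scope.
Local Open Scope ring_scope.

(* Since m has no atoms, a single agent changing its policy leaves every mass
   f^a_z(s) unchanged, so the environment faced by all agents is the same.
   Hence an agent i may copy the policy of any agent j of its type and thereby
   obtain exactly j's value; at a Nash equilibrium this cannot beat i's own
   value.  Applying this in both directions gives equality. *)

Section Deviation.
Context {R : realType} {dN dS : measure_display}
  {N : measurableType dN} {S : measurableType dS} {Z Act : finType}.

Lemma deviate_self (pi : N -> S -> Z -> Act -> R) j p : deviate pi j p j = p.
Proof. by rewrite /deviate; case: asboolP. Qed.

Lemma deviate_other (pi : N -> S -> Z -> Act -> R) j p i :
  i <> j -> deviate pi j p i = pi i.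
Proof. by rewrite /deviate; case: asboolP. Qed.

Lemma measurable_fun_deviate (pi : N -> S -> Z -> Act -> R) j p s z a :
  measurable [set j] -> measurable_fun setT (fun i => pi i s z a) ->
  measurable_fun setT (fun i => deviate pi j p i s z a).
Proof.
move=> mj mpi.
rewrite (_ : (fun i => _) =
    fun i => if `[< i = j >] then p s z a else pi i s z a); last first.
  by apply/funext => i; rewrite /deviate; case: ifP.
apply: (measurable_fun_ifT (f := fun i => `[< i = j >])) => //.
apply: (measurable_fun_bool true).
rewrite setTI (_ : _ @^-1` _ = [set j]) //.
by apply/seteqP; split => x /=; [move/asboolP | move=> ->; apply/asboolP].
Qed.

Lemma mass_deviate (m : {measure set N -> \bar R}) (loc : S -> N -> Z)
    (pi : N -> S -> Z -> Act -> R) j p :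
  measurable [set j] -> m [set j] = 0%E ->
  (forall s z, measurable (loc s @^-1` [set z])) ->
  (forall s z a, measurable_fun setT (fun i => pi i s z a)) ->
  mass m loc (deviate pi j p) = mass m loc pi.
Proof.
move=> mj mj0 loc_meas mpi.
apply/funext => s; apply/funext => z; apply/funext => a.
rewrite /mass /Rintegral; congr fine.
apply: ae_eq_integral => //.
- apply: (measurable_funS measurableT) => //.
  exact/measurable_EFinP/measurable_fun_deviate.
- apply: (measurable_funS measurableT) => //.
  exact/measurable_EFinP/mpi.
- exists [set j]; split => // i /= /not_implyP [_ dev_neq].
  by apply: contrapT => i_neq_j; apply: dev_neq; rewrite deviate_other.
Qed.

End Deviation.

Section SameType.
Context {R : realType} {dN dS : measure_display}
  {N : measurableType dN} {S : measurableType dS} {Z Act : finType} {Ty : Type}.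
Context {m : {measure set N -> \bar R} } {ty : N -> Ty} {loc : S -> N -> Z}.
Context {avail : Ty -> Z -> {set Act}} {Rw : Ty -> Z -> S -> Act -> R -> R}.
Context {T : S -> (Z -> Act -> R) -> probability S R}.
Context {P : Ty -> Z -> Act -> S -> (Z -> Act -> R) -> S -> Z -> R}.
Context {gamma : R} { pi : N -> S -> Z -> Act -> R }.
Hypothesis m_nonatomic : forall i : N, measurable [set i] /\ m [set i] = 0%E.
Hypothesis loc_meas : forall s z, measurable (loc s @^-1` [set z]).
Hypothesis pi_ok : joint_policy_ok avail ty pi.

Local Notation agent_value := (agent_value m ty loc Rw T P gamma).

Lemma agent_value_copy i j : ty i = ty j ->
  agent_value (deviate pi i (pi j)) i = agent_value pi j.
Proof.
move=> tyij; have [mi mi0] := m_nonatomic i.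
by rewrite /agent_value deviate_self mass_deviate // ?tyij //; case: pi_ok.
Qed.

Lemma nash_le_same_type : nash m ty loc avail Rw T P gamma pi ->
  forall i j s, ty i = ty j ->
  agent_value pi j s (loc s i) <= agent_value pi i s (loc s i).
Proof.
move=> pi_nash i j s tyij; rewrite -(agent_value_copy _ _ tyij).
by apply: pi_nash; rewrite tyij; case: pi_ok.
Qed.

End SameType.

Theorem corollary1 (R : realType) (dN dS : measure_display)
  (N : measurableType dN) (S : measurableType dS) (Z Act : finType) (Ty : Type)
  (m : probability N R)
  (m_nonatomic : forall i : N, measurable [set i] /\ m [set i] = 0%E)
  (ty : N -> Ty) (loc : S -> N -> Z)
  (loc_meas : forall (s : S) (z : Z), measurable (loc s @^-1` [set z]))
  (avail : Ty -> Z -> {set Act})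
  (Rw : Ty -> Z -> S -> Act -> R -> R)
  (Rw_noninc : forall t z s a, {homo Rw t z s a : x y /~ x <= y})
  (Rw_cont : forall t z s a, continuous (Rw t z s a))
  (T : S -> (Z -> Act -> R) -> probability S R)
  (P : Ty -> Z -> Act -> S -> (Z -> Act -> R) -> S -> Z -> R)
  (P_dist : forall t z a s M s',
     (forall z', 0 <= P t z a s M s' z') /\ \sum_z' P t z a s M s' z' = 1)
  (gamma : R) (gamma_01 : 0 <= gamma < 1)
  (pi : N -> S -> Z -> Act -> R)
  (pi_ok : joint_policy_ok avail ty pi)
  (pi_nash : nash m ty loc avail Rw T P gamma pi) :
  forall (s : S) (z : Z) (i j : N), ty i = ty j -> loc s i = z -> loc s j = z ->
    agent_value m ty loc Rw T P gamma pi i s z =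
    agent_value m ty loc Rw T P gamma pi j s z.
Proof.
have le_same_type := nash_le_same_type m_nonatomic loc_meas pi_ok pi_nash.
move=> s _ i j tyij <- locji; apply/eqP; rewrite eq_le; apply/andP; split.
- by rewrite -locji; exact: le_same_type.
- exact: le_same_type.
Qed.
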